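(* Let $N\ge1$, $f:\mathbb{N}^N\to\mathbb{N}$, $p$ a prime, $k\ge0$ and $\boldsymbol{\ell}\in\mathbb{N}^N$. Write $k=k_0+k_1p$ with $0\le k_0<p$, and $\boldsymbol{\ell}=\boldsymbol{\ell}_0+p\mathbf{x}$ with $\mathbf{x}\in\mathbb{N}^N$ and every entry of $\boldsymbol{\ell}_0$ in $\{0,\dots,p-1\}$. Then $$\binom{k}{\boldsymbol{\ell}}_f\equiv\sum_{\mathbf{m}\in\mathbb{N}^N}\binom{k_1}{\mathbf{x}-\mathbf{m}}_f\binom{k_0}{\boldsymbol{\ell}_0+p\mathbf{m}}_f\pmod p.$$
   Context: $\mathbb{N}=\{0,1,2,\dots\}$. For $k\ge0$ and $\mathbf{y}\in\mathbb{Z}^N$, $\binom{k}{\mathbf{y}}_f=\sum_{\mathbf{m}_1+\cdots+\mathbf{m}_k=\mathbf{y}} f(\mathbf{m}_1)\cdots f(\mathbf{m}_k)$ over tuples of vectors in $\mathbb{N}^N$ (in particular it is $0$ if $\mathbf{y}$ has a negative entry). *)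

From mathcomp Require Import all_boot all_order all_algebra.
Set Implicit Arguments. Unset Strict Implicit. Unset Printing Implicit Defensive.
Import GRing.Theory Num.Theory.

(* Vectors in N^N are functions 'I_N -> nat; vectors in Z^N are 'I_N -> int.
   binomf f k y = sum over k-tuples (m_1,...,m_k) of vectors in N^N with
   m_1 + ... + m_k = y of f(m_1)...f(m_k).  Any such tuple has all entries
   bounded by max_i |y_i|, so the sum ranges over the finite type of k-tuples
   of vectors with entries in 'I_(max |y_i| + 1); it is 0 if y has a negative
   entry (no tuple of natural vectors sums to it). *)
Definition bnd (N : nat) (y : 'I_N -> int) : nat := (\max_(i < N) `|y i|%N).+1.

Definition binomf (N : nat) (f : ('I_N -> nat) -> nat) (k : nat) (y : 'I_N -> int)
  : nat :=
  \sum_(ms : {ffun 'I_k -> {ffun 'I_N -> 'I_(bnd y)}}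
         | [forall i : 'I_N, ((\sum_(j < k) (val (ms j i)))%N%:Z)%R == y i])
     \prod_(j < k) f (fun i => val (ms j i)).

From mathcomp Require Import all_boot all_order all_algebra.
From mathcomp Require Import mpoly zify.
From Stdlib Require Import FunctionalExtensionality.
Import Order.TTheory GRing.Theory Num.Theory.
Set Implicit Arguments. Unset Strict Implicit. Unset Printing Implicit Defensive.

(* Let F be the generating polynomial of f, truncated to a box containing all
   the exponents involved, so that binomf f k y is the coefficient of X^y in
   F^k.  Over F_p the Frobenius gives F^p = F(X^p), hence
   F^k = F^k0 * F(X^p)^k1.  A monomial X^a of F^k0 times X^(p b) of
   F(X^p)^k1 contributes to X^l iff a + p b = l; as the entries of l0 are
   digits, this happens for exactly one m, namely b = x - m, a = l0 + p m. *)

Local Open Scope ring_scope.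

Lemma forall_andb (I : finType) (P Q : pred I) :
  [forall i, P i] && [forall i, Q i] = [forall i, P i && Q i].
Proof.
apply/andP/forallP => [[/forallP P_all /forallP Q_all] i | PQ_all].
  by rewrite P_all Q_all.
by split; apply/forallP => i; have /andP[] := PQ_all i.
Qed.

Section MonomialSums.
Variables (n : nat) (R : comNzRingType).
Implicit Types (J K : finType).

Lemma expr_sum_mpolyXMn J (m : J -> 'X_{1..n}) (c : J -> nat) k :
  (\sum_j 'X_[m j] *+ c j : {mpoly R[n]}) ^+ k =
  \sum_(js : {ffun 'I_k -> J}) 'X_[\sum_i m (js i)] *+ \prod_i c (js i).
Proof.
rewrite -{1}(card_ord k) -prodr_const bigA_distr_bigA; apply: eq_bigr => js _.
rewrite prodrMn; congr (_ *+ _).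
by rewrite (big_morph _ (@mpolyXD _ _) (@mpolyX0 _ _)).
Qed.

Lemma mulr_sum_mpolyXMn J K (a : J -> 'X_{1..n}) (b : K -> 'X_{1..n})
    (c : J -> nat) (d : K -> nat) :
  (\sum_j 'X_[a j] *+ c j : {mpoly R[n]}) * (\sum_j 'X_[b j] *+ d j) =
  \sum_(jk : J * K) 'X_[a jk.1 + b jk.2] *+ (c jk.1 * d jk.2).
Proof.
rewrite mulr_suml; under eq_bigr do rewrite mulr_sumr.
rewrite pair_bigA; apply: eq_bigr => -[j k] _ /=.
by rewrite mulrnAl mulrnAr -mulrnA mpolyXD mulnC.
Qed.

Lemma mcoeff_sum_mpolyXMn J (m : J -> 'X_{1..n}) (c : J -> nat) y :
  (\sum_j 'X_[m j] *+ c j : {mpoly R[n]})@_y = (\sum_(j | m j == y) c j)%:R.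
Proof.
rewrite raddf_sum natr_sum [RHS]big_mkcond /=; apply: eq_bigr => j _.
by rewrite mcoeffMn mcoeffX; case: (m j == y); rewrite ?mulr1n ?mul0rn.
Qed.

Lemma expr_pchar_sum_mpolyXMn J (m : J -> 'X_{1..n}) (c : J -> nat) p :
  p \in [pchar R] ->
  (\sum_j 'X_[m j] *+ c j : {mpoly R[n]}) ^+ p = \sum_j 'X_[m j *+ p] *+ c j.
Proof.
move=> /(GRing.rmorph_pchar (@mpolyC n R)) pchar_p.
rewrite -(pFrobenius_autE pchar_p) raddf_sum; apply: eq_bigr => j _.
by rewrite /= pFrobenius_autMn pFrobenius_autE mpolyXn.
Qed.

End MonomialSums.

Section BoxBinomial.
Variables (N : nat) (f : ('I_N -> nat) -> nat).

Definition colsum (B k : nat) (ms : {ffun 'I_k -> {ffun 'I_N -> 'I_B}}) (i : 'I_N) : nat :=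
  (\sum_(j < k) val (ms j i))%N.

Definition weight (B k : nat) (ms : {ffun 'I_k -> {ffun 'I_N -> 'I_B}}) : nat :=
  (\prod_(j < k) f (fun i => val (ms j i)))%N.

Definition box_binomf (B k : nat) (y : 'I_N -> int) : nat :=
  (\sum_(ms : {ffun 'I_k -> {ffun 'I_N -> 'I_B}} | [forall i, (colsum ms i)%:Z == y i])
     weight ms)%N.

Lemma box_binomf_widen b B k y : (b < B)%N -> (forall i, y i <= b%:Z) ->
  box_binomf b.+1 k y = box_binomf B k y.
Proof.
move=> lt_bB le_yb.
pose h (ms : {ffun 'I_k -> {ffun 'I_N -> 'I_b.+1}}) : {ffun 'I_k -> {ffun 'I_N -> 'I_B}} :=
  [ffun j => [ffun i => widen_ord lt_bB (ms j i)]].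
pose h' (ms : {ffun 'I_k -> {ffun 'I_N -> 'I_B}}) : {ffun 'I_k -> {ffun 'I_N -> 'I_b.+1}} :=
  [ffun j => [ffun i => inord (ms j i)]].
have hE ms j i : val (h ms j i) = val (ms j i) by rewrite !ffunE.
have h'hK : cancel h h'.
  by move=> ms; apply/ffunP => j; apply/ffunP => i; apply/val_inj; rewrite !ffunE /= inordK.
symmetry; rewrite /box_binomf (reindex_onto h h') => [|ms /forallP y_ms]; last first.
  apply/ffunP => j; apply/ffunP => i; apply/val_inj; rewrite hE !ffunE /= inordK //.
  have := le_yb i; rewrite -(eqP (y_ms i)) lez_nat ltnS; apply: leq_trans.
  by rewrite /colsum (bigD1 j) //= leq_addr.
apply: eq_big => [ms | ms _].
  rewrite h'hK eqxx andbT; apply: eq_forallb => i.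
  by rewrite /colsum; under eq_bigr do rewrite hE.
by apply: eq_bigr => j _; congr f; apply: functional_extensionality => i; rewrite hE.
Qed.

Lemma binomf_boxE b k y : (forall i, y i <= b%:Z) -> binomf f k y = box_binomf b.+1 k y.
Proof.
move=> le_yb; change (box_binomf (bnd y) k y = box_binomf b.+1 k y); rewrite /bnd.
have le_ymax i : y i <= (\max_(i < N) `|y i|%N)%:Z.
  apply: le_trans (ler_norm (y i)) _; rewrite -abszE lez_nat.
  exact: (@leq_bigmax _ (fun i => `|y i|%N) i).
set c := (\max_(i < N) _)%N in le_ymax *.
rewrite (@box_binomf_widen c (maxn c b).+1) // ?(@box_binomf_widen b (maxn c b).+1) //;
  by rewrite ltnS ?leq_maxl ?leq_maxr.
Qed.

End BoxBinomial.

Section GeneratingPolynomial.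
Variables (N : nat) (f : ('I_N -> nat) -> nat) (R : comNzRingType).

Definition mnm_of (v : 'I_N -> nat) : 'X_{1..N} := [multinom v i | i < N].

Lemma eq_mnm_of (m : 'X_{1..N}) v : (m == mnm_of v) = [forall i, m i == v i].
Proof.
apply/eqP/forallP => [-> i | m_eq]; first by rewrite mnmE.
by apply/mnmP => i; rewrite mnmE (eqP (m_eq i)).
Qed.

Lemma sum_mnm_of B k (ms : {ffun 'I_k -> {ffun 'I_N -> 'I_B}}) :
  (\sum_(j < k) mnm_of (fun i => val (ms j i)))%MM = mnm_of (colsum ms).
Proof.
by apply/mnmP => i; rewrite mnm_sumE !mnmE; apply: eq_bigr => j _; rewrite mnmE.
Qed.

Definition genpoly B : {mpoly R[N]} :=
  \sum_(w : {ffun 'I_N -> 'I_B}) 'X_[mnm_of (fun i => val (w i))] *+ f (fun i => val (w i)).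

Lemma mcoeff_genpoly_expr B k (y : 'I_N -> nat) :
  (genpoly B ^+ k)@_(mnm_of y) = (box_binomf f B k (fun i => (y i)%:Z))%:R.
Proof.
rewrite expr_sum_mpolyXMn mcoeff_sum_mpolyXMn; congr _%:R; apply: eq_bigl => ms.
by rewrite sum_mnm_of eq_mnm_of; apply: eq_forallb => i; rewrite mnmE eqz_nat.
Qed.

Lemma mcoeff_genpoly_expr_pchar B p k0 k1 (y : 'I_N -> nat) : p \in [pchar R] ->
  (genpoly B ^+ (k0 + k1 * p))@_(mnm_of y) =
  (\sum_(ms : {ffun 'I_k0 -> {ffun 'I_N -> 'I_B}} * {ffun 'I_k1 -> {ffun 'I_N -> 'I_B}}
        | [forall i, colsum ms.1 i + p * colsum ms.2 i == y i]%N)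
     weight f ms.1 * weight f ms.2)%N%:R.
Proof.
move=> pchar_p; rewrite exprD mulnC exprM /genpoly (expr_pchar_sum_mpolyXMn _ _ pchar_p).
rewrite !expr_sum_mpolyXMn mulr_sum_mpolyXMn mcoeff_sum_mpolyXMn; congr _%:R.
apply: eq_bigl => -[ms0 ms1] /=; rewrite eq_mnm_of; apply: eq_forallb => i.
rewrite mnmDE !mnm_sumE /colsum big_distrr /=; congr (_ + _ == _)%N.
  by apply: eq_bigr => j _; rewrite mnmE.
by apply: eq_bigr => j _; rewrite mulmnE mnmE mulnC.
Qed.

End GeneratingPolynomial.

Lemma digit_shiftE p (l l0 x a b m : nat) : (l0 < p)%N -> l = (l0 + p * x)%N ->
  (b%:Z == x%:Z - m%:Z) && (a%:Z == (l0 + p * m)%N%:Z) =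
  (m == x - b)%N && (a + p * b == l)%N.
Proof.
move=> lt_l0p ->; apply/andP/andP => -[/eqP eq1 /eqP eq2].
  have -> : x = (b + m)%N by lia.
  by split; apply/eqP; nia.
have le_bx : (b <= x)%N.
  rewrite leqNgt; apply/negP => lt_xb.
  have : (p * x.+1 <= p * b)%N by rewrite leq_mul2l lt_xb orbT.
  lia.
have -> : x = (b + m)%N by lia.
by split; apply/eqP; nia.
Qed.

Section DigitShift.
Variables (N p M : nat) (l l0 x : 'I_N -> nat).
Hypotheses (lt_l0p : forall i, (l0 i < p)%N) (l_split : forall i, l i = (l0 i + p * x i)%N)
  (le_xM : forall i, (x i <= M)%N).

Lemma card_digit_shift (a b : 'I_N -> nat) :
  #|[pred m : {ffun 'I_N -> 'I_M.+1} |
     [forall i, (b i)%:Z == (x i)%:Z - (m i)%:Z] &&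
     [forall i, (a i)%:Z == (l0 i + p * m i)%N%:Z]]| =
  [forall i, a i + p * b i == l i]%N.
Proof.
pose m0 : {ffun 'I_N -> 'I_M.+1} := [ffun i => inord (x i - b i)].
have m0_val i : val (m0 i) = (x i - b i)%N.
  by rewrite ffunE /= inordK // ltnS (leq_trans (leq_subr _ _) (le_xM i)).
have m0E m : (m == m0) = [forall i, val (m i) == x i - b i]%N.
  apply/eqP/forallP => [-> i | m_eq]; first by rewrite m0_val.
  by apply/ffunP => i; apply/val_inj; rewrite m0_val (eqP (m_eq i)).
rewrite (@eq_card _ _ [pred m | (m == m0) && [forall i, a i + p * b i == l i]%N]); last first.
  move=> m; rewrite !inE m0E !forall_andb; apply: eq_forallb => i.
  exact: digit_shiftE.
case: [forall i, _]; last by apply: eq_card0 => m; rewrite !inE andbF.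
by rewrite (@eq_card1 _ m0) // => m; rewrite !inE.
Qed.

Variable f : ('I_N -> nat) -> nat.

Lemma sum_weight_digit_split B k0 k1 :
  (\sum_(ms : {ffun 'I_k0 -> {ffun 'I_N -> 'I_B}} * {ffun 'I_k1 -> {ffun 'I_N -> 'I_B}}
        | [forall i, colsum ms.1 i + p * colsum ms.2 i == l i]%N)
     weight f ms.1 * weight f ms.2)%N =
  (\sum_(m : {ffun 'I_N -> 'I_M.+1})
     box_binomf f B k1 (fun i => ((x i)%:Z - (m i)%:Z)%R) *
     box_binomf f B k0 (fun i => (l0 i + p * m i)%N%:Z))%N.
Proof.
pose E1 (m : {ffun 'I_N -> 'I_M.+1}) (ms1 : {ffun 'I_k1 -> {ffun 'I_N -> 'I_B}}) :=
  [forall i, (colsum ms1 i)%:Z == (x i)%:Z - (m i)%:Z].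
pose E0 (m : {ffun 'I_N -> 'I_M.+1}) (ms0 : {ffun 'I_k0 -> {ffun 'I_N -> 'I_B}}) :=
  [forall i, (colsum ms0 i)%:Z == (l0 i + p * m i)%N%:Z].
have expand (m : {ffun 'I_N -> 'I_M.+1}) :
    (box_binomf f B k1 (fun i => ((x i)%:Z - (m i)%:Z)%R) *
     box_binomf f B k0 (fun i => (l0 i + p * m i)%N%:Z))%N =
    (\sum_ms0 \sum_ms1 (if E1 m ms1 && E0 m ms0 then weight f ms0 * weight f ms1 else 0))%N.
  rewrite mulnC big_distrlr big_mkcond /=; apply: eq_bigr => ms0 _.
  rewrite big_mkcond /= -/(E0 m ms0); case: (E0 m ms0).
    by apply: eq_bigr => ms1 _; rewrite andbT.
  by rewrite big1 // => ms1 _; rewrite andbF.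
rewrite (eq_bigr _ (fun m _ => expand m)) exchange_big /=.
under [RHS]eq_bigr do rewrite exchange_big /=.
rewrite big_mkcond [RHS]pair_bigA; apply: eq_bigr => -[ms0 ms1] _ /=.
rewrite -big_mkcond (sum_nat_const [pred m | E1 m ms1 && E0 m ms0]).
by rewrite card_digit_shift; case: ifP; rewrite ?mul1n.
Qed.

Lemma box_binomf_lucas B k0 k1 : prime p ->
  (box_binomf f B (k0 + k1 * p) (fun i => (l i)%:Z))%:R =
  (\sum_(m : {ffun 'I_N -> 'I_M.+1})
     box_binomf f B k1 (fun i => ((x i)%:Z - (m i)%:Z)%R) *
     box_binomf f B k0 (fun i => (l0 i + p * m i)%N%:Z))%N%:R :> 'F_p.
Proof.
move=> p_pr.
rewrite -(mcoeff_genpoly_expr f) (mcoeff_genpoly_expr_pchar _ _ _ _ _ (pchar_Fp p_pr)).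
by rewrite sum_weight_digit_split.
Qed.

End DigitShift.

Local Close Scope ring_scope.

Theorem theorem14 (N : nat) (f : ('I_N -> nat) -> nat) (p k k0 k1 : nat)
    (l l0 x : 'I_N -> nat) :
  (1 <= N)%N -> prime p ->
  (k0 < p)%N -> k = (k0 + k1 * p)%N ->
  (forall i, l0 i < p)%N -> (forall i, l i = l0 i + p * x i)%N ->
  binomf f k (fun i => ((l i)%:Z)%R) =
    (\sum_(m : {ffun 'I_N -> 'I_((\max_(i < N) x i).+1)})
       binomf f k1 (fun i => ((x i)%:Z - (val (m i))%:Z)%R) *
       binomf f k0 (fun i => ((l0 i + p * val (m i))%N%:Z)%R))%N %[mod p].
Proof.
move=> _ p_pr _ -> lt_l0p l_split.
set M := \max_(i < N) x i.
have le_xM i : x i <= M by exact: leq_bigmax.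
pose b := p * M + p.-1.
have le_shift i m : m <= M -> l0 i + p * m <= b.
  by move=> le_mM; have := lt_l0p i; rewrite /b; nia.
rewrite (@binomf_boxE _ _ b) => [|i]; last by rewrite l_split lez_nat le_shift.
have boxE (m : {ffun 'I_N -> 'I_M.+1}) :
    binomf f k1 (fun i => ((x i)%:Z - (m i)%:Z)%R) *
    binomf f k0 (fun i => ((l0 i + p * m i)%:Z)%R) =
    box_binomf f b.+1 k1 (fun i => ((x i)%:Z - (m i)%:Z)%R) *
    box_binomf f b.+1 k0 (fun i => ((l0 i + p * m i)%:Z)%R).
  rewrite !(@binomf_boxE _ _ b) // => i.
    by rewrite lez_nat le_shift // -ltnS ltn_ord.
  rewrite (@le_trans _ _ (x i)%:Z%R) ?gerBl // lez_nat /b.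
  by have := le_xM i; have := prime_gt0 p_pr; nia.
rewrite (eq_bigr _ (fun m _ => boxE m)).
by rewrite -!(val_Fp_nat p_pr); congr val; exact: box_binomf_lucas.
Qed.
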